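(* Let $\lambda>0$, $d\in\mathbb{N}$, and equip $\mathbb{R}^d$ with $\|x\|_1=\sum_{i=1}^d|x_i|$. Define $Q:\mathbb{R}^d\to\mathbb{R}^d$ by $Q(x_1,\dots,x_d)=(\lambda-x_d,x_1,\dots,x_{d-1})$, $P_C:\mathbb{R}^d\to\mathbb{R}^d$ by $(P_C(x))_i=P_{[0,\lambda]}(x_i)$, where $P_{[0,\lambda]}(t)=\min\{\max\{t,0\},\lambda\}$, and $T=Q\circ P_C$. For $x\in\mathbb{R}^d$, let $\operatorname{prog}(x)=\max\{i\in\{1,\dots,d\}: |x_i|>0\}$ and $\operatorname{prog}(0)=0$. Then for all $x\in\mathbb{R}^d$ with $\operatorname{prog}(x)<d$, $\|x-Tx\|_1\ge\lambda$. *)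

From mathcomp Require Import all_boot all_order all_algebra.
Set Implicit Arguments. Unset Strict Implicit. Unset Printing Implicit Defensive.
Import Order.TTheory GRing.Theory Num.Theory.
Local Open Scope ring_scope.

(* Vectors of R^d are represented as 'rV[R]_d; coordinate i (0-based) is x ord0 i. *)

Definition norm1 (R : realFieldType) (d : nat) (x : 'rV[R]_d) : R :=
  \sum_(i < d) `|x ord0 i|.

Definition proj01 (R : realFieldType) (lam t : R) : R :=
  Num.min (Num.max t 0) lam.

Definition PC (R : realFieldType) (d : nat) (lam : R) (x : 'rV[R]_d) : 'rV[R]_d :=
  \row_(i < d) proj01 lam (x ord0 i).

(* coordinate k (0-based) as a nat index; only used with k < d *)
Definition coord (R : realFieldType) (d : nat) (x : 'rV[R]_d) (k : nat) : R :=
  match @insub nat (fun k => (k < d)%N) 'I_d k with Some j => x ord0 j | None => 0 end.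

Definition Qmap (R : realFieldType) (d : nat) (lam : R) (x : 'rV[R]_d) : 'rV[R]_d :=
  \row_(i < d) (if (i : nat) == 0%N then lam - coord x d.-1
                else coord x i.-1).

Definition Tmap (R : realFieldType) (d : nat) (lam : R) (x : 'rV[R]_d) : 'rV[R]_d :=
  Qmap lam (PC lam x).

Definition prog (R : realFieldType) (d : nat) (x : 'rV[R]_d) : nat :=
  \max_(i < d | 0 < `|x ord0 i|) i.+1.

From Pilot Require Import Defs.
From mathcomp Require Import all_boot all_order all_algebra.
From mathcomp Require Import lra.
Import Order.TTheory GRing.Theory Num.Theory.
Local Open Scope ring_scope.

(** With [y = P_C x], the coordinates of [x - Tx] are [x_1 - (λ - y_d)] and
    [x_{i+1} - y_i], and [y_d = 0] because [prog x < d] forces [x_d = 0].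
    Since [P_{[0,λ]}] moves a point closer to every point of [[0,λ]],
    [|x_1 - λ| >= λ - y_1] and [|x_{i+1} - y_i| >= y_i - y_{i+1}]; these lower
    bounds telescope to [λ - y_d = λ]. *)

Section Projection.

Variables (R : realFieldType) (lam : R).
Hypothesis lam_ge0 : 0 <= lam.

Lemma proj01_ge0 (a : R) : 0 <= proj01 lam a.
Proof. by rewrite /proj01 le_min le_max lexx orbT. Qed.

Lemma proj01_le (a : R) : proj01 lam a <= lam.
Proof. by rewrite /proj01 ge_min lexx orbT. Qed.

Lemma proj01_0 : proj01 lam 0 = 0.
Proof. by rewrite /proj01 maxxx min_l. Qed.

Lemma proj01_dist_le (a b : R) : 0 <= b <= lam ->
  `|proj01 lam a - b| <= `|a - b|.
Proof.
case/andP=> b_ge0 b_le; rewrite /proj01.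
have [a_le0 | a_gt0] := leP a 0.
  rewrite min_l // sub0r normrN ger0_norm // ler0_norm; lra.
have [a_lelam | a_gtlam] := leP a lam; first by [].
by rewrite !ger0_norm; lra.
Qed.

Lemma proj01_telescope (x : nat -> R) (n : nat) :
  lam - proj01 lam (x n)
    <= `|x 0%N - lam| + \sum_(i < n) `|x i.+1 - proj01 lam (x i)|.
Proof.
elim: n => [|n IHn].
  rewrite big_ord0 addr0; apply: le_trans (ler_norm _) _.
  by rewrite distrC proj01_dist_le // lam_ge0 lexx.
rewrite big_ord_recr /= addrA.
have step : proj01 lam (x n) - proj01 lam (x n.+1)
    <= `|x n.+1 - proj01 lam (x n)|.
  apply: le_trans (ler_norm _) _.
  by rewrite distrC proj01_dist_le // proj01_ge0 proj01_le.
lra.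
Qed.

End Projection.

Lemma coordE (R : realFieldType) (n : nat) (x : 'rV[R]_n.+1) (k : nat) :
  (k < n.+1)%N -> Defs.coord x k = x ord0 (inord k).
Proof.
move=> lt_k; rewrite /Defs.coord insubT /=; congr (x ord0 _).
by apply: val_inj; rewrite /= inordK.
Qed.

Lemma ltn_prog (R : realFieldType) (d : nat) (x : 'rV[R]_d) (i : 'I_d) :
  x ord0 i != 0 -> (i < prog x)%N.
Proof.
rewrite -normr_gt0 => nz_xi.
exact: (@leq_bigmax_cond _ (fun j : 'I_d => 0 < `|x ord0 j|) (fun j => j.+1)).
Qed.

Lemma norm1_sub_Tmap (R : realFieldType) (lam : R) (n : nat) (x : 'rV[R]_n.+1) :
  let xn (k : nat) := x ord0 (inord k) in
  norm1 (x - Tmap lam x)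
    = `|xn 0%N - (lam - proj01 lam (xn n))|
      + \sum_(i < n) `|xn i.+1 - proj01 lam (xn i)|.
Proof.
move=> xn; rewrite /norm1 big_ord_recl; congr (`|_| + _).
  rewrite !mxE /= coordE // mxE /xn (_ : ord0 = inord 0 :> 'I_n.+1) //.
  by apply/val_inj; rewrite /= inordK.
apply: eq_bigr => i _; rewrite !mxE /= add0n coordE; last exact: leqW.
rewrite mxE /xn (_ : lift ord0 i = inord i.+1) //.
by apply/val_inj; rewrite /= inordK ?ltnS.
Qed.

Theorem lemma2 (R : realFieldType) (lam : R) (d : nat) (x : 'rV[R]_d) :
  0 < lam -> (prog x < d)%N -> lam <= norm1 (x - Tmap lam x).
Proof.
move=> /ltW lam_ge0; case: d x => [|n] x // prog_lt.
have x_last : x ord0 (inord n) = 0.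
  apply: contraTeq prog_lt => /ltn_prog.
  by rewrite inordK // -leqNgt.
have := @proj01_telescope _ _ lam_ge0 (fun k => x ord0 (inord k)) n.
by rewrite norm1_sub_Tmap /= x_last proj01_0 // !subr0.
Qed.
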